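(* Let $w=w_1\cdots w_n$ be a word of length $n\ge 2$ such that $w_i\ne w_{n-i+1}$ for some $i$. Then $f(w)\le 2n$.
   Context: A word of length $n$ is a sequence $w=w_1w_2\cdots w_n$ of letters (symbols). Let $[n]=\{1,\dots,n\}$. An $n$-grid is a function $G:[n]^2\to\Sigma$, where $\Sigma$ is an arbitrary set of letters. The $i$th row of $G$ contains $w$ if $G(i,j)=w_j$ for all $1\le j\le n$, or $G(i,j)=w_{n-j+1}$ for all $1\le j\le n$. The $j$th column contains $w$ if $G(i,j)=w_i$ for all $i$, or $G(i,j)=w_{n-i+1}$ for all $i$. The main diagonal contains $w$ if $G(i,i)=w_i$ for all $i$ or $G(i,i)=w_{n-i+1}$ for all $i$; the anti-diagonal contains $w$ if $G(i,n-i+1)=w_i$ for all $i$ or $G(i,n-i+1)=w_{n-i+1}$ for all $i$. Let $f(w,G)$ be the number of the $2n+2$ lines ($n$ rows, $n$ columns, $2$ diagonals) of $G$ that contain $w$, and $f(w)=\max_G f(w,G)$ over all $n$-grids $G$. *)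

From mathcomp Require Import all_boot.
Set Implicit Arguments. Unset Strict Implicit. Unset Printing Implicit Defensive.

(* Indices are 0-based: 'I_n stands for [n]; rev_ord i is n-i+1 in 1-based terms. *)
Section Grid.
Variables (Sigma : eqType) (n : nat).

Definition word := 'I_n -> Sigma.
Definition grid := 'I_n -> 'I_n -> Sigma.

Definition line_contains (w : word) (l : 'I_n -> Sigma) : bool :=
  [forall j, l j == w j] || [forall j, l j == w (rev_ord j)].

Definition row_contains (w : word) (G : grid) (i : 'I_n) : bool :=
  line_contains w (fun j => G i j).
Definition col_contains (w : word) (G : grid) (j : 'I_n) : bool :=
  line_contains w (fun i => G i j).
Definition diag_contains (w : word) (G : grid) : bool :=
  line_contains w (fun i => G i i).
Definition antidiag_contains (w : word) (G : grid) : bool :=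
  line_contains w (fun i => G i (rev_ord i)).

Definition f_wG (w : word) (G : grid) : nat :=
  #|[pred i | row_contains w G i]| + #|[pred j | col_contains w G j]|
  + diag_contains w G + antidiag_contains w G.

End Grid.

From mathcomp Require Import all_boot.
From mathcomp Require Import zify.

Set Implicit Arguments.
Unset Strict Implicit.

(* Pick i with w_i <> w_k, where k = n + 1 - i, and colour a letter by whether
   it equals w_i.  A line containing w meets the two cells it has among
   (i,i), (i,k), (k,i), (k,k) in letters of opposite colours.  Row i,
   column k and the diagonal pairwise share these cells in a triangle, so by
   parity they cannot all contain w; the same holds for the triangles
   (column i, row k, diagonal), (row i, column i, anti-diagonal) and
   (row k, column k, anti-diagonal).  Hence every diagonal containing w is
   paid for by a missing row or column among i and k, and f(w,G) <= 2n. *)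

Lemma bool_odd_cycle (a b c : bool) : b = ~~ a -> c = ~~ b -> c = ~~ a -> False.
Proof. by move=> -> ->; case: a. Qed.

Lemma card_add_two_outside (T : finType) (P : pred T) (a b : T) :
  a != b -> #|P| + ~~ P a + ~~ P b <= #|T|.
Proof.
move=> ab; rewrite -(cardC P) -addnA leq_add2l cardE.
have -> : (~~ P a) + (~~ P b) = size (filter (predC P) [:: a; b]).
  by rewrite size_filter /= addn0.
apply: uniq_leq_size => [|x]; first by rewrite filter_uniq //= inE ab.
by rewrite mem_filter mem_enum => /andP[].
Qed.

Lemma lines_count_bound (n p q : nat) (pi pk qi qk d a : bool) :
  p + ~~ pi + ~~ pk <= n -> q + ~~ qi + ~~ qk <= n ->
  ~~ [&& pi, qk & d] -> ~~ [&& qi, pk & d] ->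
  ~~ [&& pi, qi & a] -> ~~ [&& qk, pk & a] ->
  p + q + d + a <= 2 * n.
Proof. by case: pi pk qi qk d a; lia. Qed.

Section AsymmetricPair.
Variables (Sigma : eqType) (n : nat) (w : word Sigma n) (i : 'I_n).
Hypothesis w_asym : w i != w (rev_ord i).
Local Notation k := (rev_ord i).

Lemma line_contains_flip (L : 'I_n -> Sigma) :
  line_contains w L -> (L k == w i) = ~~ (L i == w i).
Proof.
by case/orP => /forallP L_w;
  rewrite !(eqP (L_w _)) ?rev_ordK eqxx eq_sym (negbTE w_asym).
Qed.

Variable G : grid Sigma n.

Lemma not_row_col_diag :
  ~~ [&& row_contains w G i, col_contains w G k & diag_contains w G].
Proof.
apply/and3P => -[/line_contains_flip r /line_contains_flip c /line_contains_flip d].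
exact: bool_odd_cycle r c d.
Qed.

Lemma not_col_row_diag :
  ~~ [&& col_contains w G i, row_contains w G k & diag_contains w G].
Proof.
apply/and3P => -[/line_contains_flip c /line_contains_flip r /line_contains_flip d].
exact: bool_odd_cycle c r d.
Qed.

Lemma not_row_col_antidiag :
  ~~ [&& row_contains w G i, col_contains w G i & antidiag_contains w G].
Proof.
apply/and3P => -[/line_contains_flip r /line_contains_flip c].
move/line_contains_flip; rewrite rev_ordK => a.
exact: bool_odd_cycle r a c.
Qed.

Lemma not_col_row_antidiag :
  ~~ [&& col_contains w G k, row_contains w G k & antidiag_contains w G].
Proof.
apply/and3P => -[/line_contains_flip c /line_contains_flip r].
move/line_contains_flip; rewrite rev_ordK => a.
exact: bool_odd_cycle a r c.
Qed.

End AsymmetricPair.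

Theorem lemma11 (Sigma : eqType) (n : nat) (w : word Sigma n) :
  2 <= n ->
  (exists i : 'I_n, w i != w (rev_ord i)) ->
  forall G : grid Sigma n, f_wG w G <= 2 * n.
Proof.
move=> _ [i w_asym] G.
have ik : i != rev_ord i by apply: contraNneq w_asym => <-.
have rows := card_add_two_outside [pred j | row_contains w G j] ik.
have cols := card_add_two_outside [pred j | col_contains w G j] ik.
rewrite card_ord /= in rows cols.
rewrite /f_wG.
exact: lines_count_bound rows cols (not_row_col_diag w_asym G)
  (not_col_row_diag w_asym G) (not_row_col_antidiag w_asym G)
  (not_col_row_antidiag w_asym G).
Qed.
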